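(* Let $q\in\mathbb{C}\setminus\{0\}$ be not a root of unity, let $\lambda,\mu$ be strict partitions with $|\lambda|=|\mu|=n$, let $\Lambda\in\mathcal S_\lambda$, $\Gamma\in\mathcal S_\mu$, and let $\nu_1,\nu_2\in\{-1,1\}^n$. If $\big((q_k^\Lambda)^{\nu_1(k)}\big)_{k=1}^n=\big((q_k^\Gamma)^{\nu_2(k)}\big)_{k=1}^n$, then $\Lambda=\Gamma$. In particular $P(\lambda)\cap P(\mu)=\emptyset$ if $\lambda\neq\mu$.
   Context: $[m]_{q^2}=(q^{2m}-q^{-2m})/(q^2-q^{-2})$; for each integer $m\ge0$ a square root $s_m$ of $[m+1]_{q^2}[m]_{q^2}$ is fixed once and for all and $x_m=[m+1]_{q^2}-[m]_{q^2}-(q-q^{-1})s_m$. For a strict partition $\lambda$ (distinct positive parts), the shifted diagram has boxes $(i,j)$ with $i\le j\le i+\lambda_i-1$; $\mathcal S_\lambda$ is the set of standard shifted tableaux (fillings by $1,\dots,|\lambda|$ increasing along rows and columns). For $\Lambda\in\mathcal S_\lambda$ and $k$, let $(i_k,j_k)$ be the box containing $k$ and $q_k^\Lambda=x_{j_k-i_k}$. $P(\lambda)$ denotes the set of weights of the Jones–Nazarov $G_n$-module $V_\lambda$ with respect to its commuting Jucys–Murphy elements; concretely $P(\lambda)=\{((q_k^\Lambda)^{\nu(k)})_{k=1}^n:\Lambda\in\mathcal S_\lambda,\ \nu\in\{\pm1\}^n\}$. *)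

From HB Require Import structures.
From mathcomp Require Import all_boot all_order all_algebra.
From mathcomp Require Export complex.
From mathcomp Require Export reals.
Set Implicit Arguments. Unset Strict Implicit. Unset Printing Implicit Defensive.
Import Order.TTheory GRing.Theory Num.Theory.
Local Open Scope ring_scope.

Definition qint (F : fieldType) (q : F) (m : nat) : F :=
  (q ^+ (2 * m) - q ^- (2 * m)) / (q ^+ 2 - q ^- 2).

Definition xq (F : fieldType) (q : F) (s : nat -> F) (m : nat) : F :=
  qint q m.+1 - qint q m - (q - q^-1) * s m.

Definition strict_partition (la : seq nat) : bool :=
  sorted (fun a b => b < a)%N la && all (fun p => 0 < p)%N la.

(* box (i,j) (1-indexed) lies in the shifted diagram of la:
   1 <= i <= l(la), i <= j <= i + la_i - 1 *)
Definition in_shifted (la : seq nat) (b : nat * nat) : bool :=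
  [&& (1 <= b.1)%N, (b.1 <= size la)%N, (b.1 <= b.2)%N
    & (b.2 < b.1 + nth 0%N la b.1.-1)%N].

(* A standard shifted tableau of shape la with n boxes, encoded by
   pos : 'I_n -> nat * nat, where pos k is the box containing the entry k+1. *)
Definition is_sst (la : seq nat) (n : nat) (pos : {ffun 'I_n -> nat * nat}) : Prop :=
  [/\ injective pos,
      (forall k, in_shifted la (pos k)),
      (forall b, in_shifted la b -> exists k, pos k = b),
      (forall k l : 'I_n, (pos k).1 = (pos l).1 -> ((pos k).2 < (pos l).2)%N -> (k < l)%N)
    & (forall k l : 'I_n, (pos k).2 = (pos l).2 -> ((pos k).1 < (pos l).1)%N -> (k < l)%N)].

Definition qk (F : fieldType) (q : F) (s : nat -> F) (n : nat)
  (pos : {ffun 'I_n -> nat * nat}) (k : 'I_n) : F :=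
  xq q s ((pos k).2 - (pos k).1)%N.

(* The weight q_k^Λ = x_c depends only on the content c = j_k - i_k of the box of k, and x_c^{±1}
   is a root of X^2 - 2 g_c X + 1 with g_c = [c+1] - [c] = (q^{2c+1} + q^{-2c-1}) / (q + q^{-1}).
   Hence a weight determines g_c, and g is injective because q is not a root of unity: the
   weights determine the content of every entry.  Two standard shifted tableaux with the same
   contents coincide: if they agree on 1, ..., k-1 but put k on the same diagonal in different
   rows, then the box of that diagonal in the higher row holds k in one tableau and, since entries
   increase down a diagonal, an entry < k in the other, although the tableaux agree below k.
   Finally a tableau determines its shape. *)

From HB Require Import structures.
From mathcomp Require Import all_boot all_order all_algebra.
From mathcomp Require Import complex reals.
From mathcomp Require Import ring zify.
Import Order.TTheory GRing.Theory Num.Theory.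

Section Weights.
Local Open Scope ring_scope.
Variables (F : fieldType) (q : F) (s : nat -> F).
Hypothesis q_neq0 : q != 0.
Hypothesis q_not_root1 : forall m, (0 < m)%N -> q ^+ m != 1.
Hypothesis s_sq : forall m, s m ^+ 2 = qint q m.+1 * qint q m.

Let qX_neq0 m : q ^+ m != 0. Proof. exact: expf_neq0. Qed.

Lemma qX_inj : injective (fun m => q ^+ m).
Proof.
move=> a b /= eq_ab; wlog lt_ab : a b eq_ab / (a < b)%N.
  by move=> W; case: (ltngtP a b) => [/W|/(W b a (esym eq_ab))|] ->.
move: eq_ab; rewrite -(subnKC (ltnW lt_ab)) exprD -{1}[q ^+ a]mulr1 => /mulfI.
by move=> /(_ (qX_neq0 a)) /esym /eqP; rewrite (negbTE (q_not_root1 _ _)) // subn_gt0.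
Qed.

Let qX4_neq1 : q ^+ 4 - 1 != 0.
Proof. by rewrite subr_eq0 q_not_root1. Qed.

Definition qint_gap m := qint q m.+1 - qint q m.

Lemma qint_gapE m :
  qint_gap m * (q ^+ 2 + 1) * q ^+ (2 * m) = q ^+ 2 * (q ^+ (2 * m)) ^+ 2 + 1.
Proof.
rewrite /qint_gap /qint mulnS exprD.
field.
by rewrite q_neq0 qX_neq0 -expr2 -exprM andbT; exact: qX4_neq1.
Qed.

Lemma qint_gap_inj : injective qint_gap.
Proof.
move=> m k eq_gap; have := qint_gapE m; have := qint_gapE k.
set P := q ^+ (2 * m); set Q := q ^+ (2 * k) => eQ eP.
have : (P - Q) * (q ^+ 2 * P * Q - 1) = 0.
  transitivity ((q ^+ 2 * P ^+ 2 + 1) * Q - (q ^+ 2 * Q ^+ 2 + 1) * P); first by ring.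
  by rewrite -eP -eQ eq_gap; ring.
move/eqP; rewrite mulf_eq0 !subr_eq0 => /orP [/eqP /qX_inj /eqP | ].
  by rewrite eqn_mul2l => /eqP.
rewrite /P /Q -!exprD => /eqP eq1.
by have := q_not_root1 (2 + 2 * m + 2 * k) isT; rewrite eq1 eqxx.
Qed.

(* x_m and its inverse are the two roots of X^2 - 2 g_m X + 1, because
   g_m^2 - 1 = (q - q^-1)^2 [m+1] [m] = (q - q^-1)^2 s_m^2. *)
Lemma xq_mul_conj m : xq q s m * (2 * qint_gap m - xq q s m) = 1.
Proof.
have -> : xq q s m * (2 * qint_gap m - xq q s m)
          = qint_gap m ^+ 2 - (q - q^-1) ^+ 2 * s m ^+ 2 by rewrite /xq /qint_gap; ring.
rewrite s_sq /qint_gap /qint mulnS exprD.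
field.
by rewrite q_neq0 qX_neq0 -expr2 -exprM andbT; exact: qX4_neq1.
Qed.

Lemma xqV m : (xq q s m)^-1 = 2 * qint_gap m - xq q s m.
Proof. exact/mulr1_eq/xq_mul_conj. Qed.

Lemma xq_powz_addV m {nu : int} : nu = 1 \/ nu = -1 ->
  xq q s m ^ nu + (xq q s m ^ nu)^-1 = 2 * qint_gap m.
Proof.
by case=> ->; rewrite ?expr1z ?exprN1 ?invrK xqV; ring.
Qed.

Lemma xq_powz_inj (two_neq0 : 2 != 0 :> F) m m' (nu nu' : int) :
  nu = 1 \/ nu = -1 -> nu' = 1 \/ nu' = -1 ->
  xq q s m ^ nu = xq q s m' ^ nu' -> m = m'.
Proof.
move=> nu_pm1 nu'_pm1 eq_x; apply/qint_gap_inj/(mulfI two_neq0).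
by rewrite -(xq_powz_addV m nu_pm1) -(xq_powz_addV m' nu'_pm1) eq_x.
Qed.

End Weights.

Definition content (b : nat * nat) := b.2 - b.1.

Lemma strict_partition_nth_ltn {la} i : strict_partition la ->
  i.+1 < size la -> nth 0 la i.+1 < nth 0 la i.
Proof. by case/andP => /(sortedP 0) h _ /h. Qed.

Lemma strict_partition_nth_gt0 {la} i : strict_partition la ->
  i < size la -> 0 < nth 0 la i.
Proof. by case/andP => _ /(all_nthP 0) h /h. Qed.

Lemma in_shifted_diag_pred {la} b c : strict_partition la -> 0 < b ->
  in_shifted la (b.+1, b.+1 + c) -> in_shifted la (b, b + c) && in_shifted la (b, b + c.+1).
Proof.
move=> hla b_gt0 /and4P [_ /= lt_b_size _ /= lt_c].
have := strict_partition_nth_ltn b.-1 hla; rewrite (prednK b_gt0) => /(_ lt_b_size).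
by rewrite /in_shifted /= => lt_nth; apply/andP; split; apply/and4P; split; lia.
Qed.

Section ShiftedTableau.
Context {la : seq nat} {n : nat} {T : {ffun 'I_n -> nat * nat}}.
Hypotheses (hla : strict_partition la) (hT : is_sst la T).

Lemma sst_in_shifted k : in_shifted la (T k).
Proof. by case: hT. Qed.

Lemma sst_content_le k : (T k).1 <= (T k).2.
Proof. by case/and4P: (sst_in_shifted k). Qed.

Lemma sst_diag_up {a c d} {k : 'I_n} : 0 < a -> T k = (a + d, a + d + c) ->
  exists2 l : 'I_n, T l = (a, a + c) & l <= k.
Proof.
case: hT => _ _ T_onto T_row T_col a_gt0.
elim: d k => [|d IHd] k Tk; first by exists k; rewrite ?Tk ?addn0.
have Tk_in := sst_in_shifted k; rewrite Tk addnS in Tk_in.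
have /andP [/T_onto [k0 Tk0] /T_onto [k1 Tk1]] :=
  in_shifted_diag_pred (a + d) c hla (ltn_addr d a_gt0) Tk_in.
have [l Tl le_l_k0] := IHd k0 Tk0; exists l => //.
have : k0 < k1 by apply: T_row; rewrite Tk0 Tk1 //=; lia.
have : k1 < k by apply: T_col; rewrite Tk1 Tk /=; lia.
lia.
Qed.

End ShiftedTableau.

Lemma sst_row_le {la1 la2 n} {T1 T2 : {ffun 'I_n -> nat * nat}} {k : 'I_n} :
  strict_partition la2 -> is_sst la1 T1 -> is_sst la2 T2 ->
  (forall l : 'I_n, l < k -> T1 l = T2 l) -> content (T1 k) = content (T2 k) ->
  (T2 k).1 <= (T1 k).1.
Proof.
move=> hla2 hT1 hT2 agree.
have := sst_in_shifted hT1 k; have := sst_content_le hT2 k.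
case E1: (T1 k) => [i j]; case E2: (T2 k) => [i' j'] /= le_ij'.
case/and4P => /= i_gt0 _ /= le_ij _.
rewrite /content /= leqNgt => eq_c; apply/negP => lt_ii'.
have T2k : T2 k = (i + (i' - i), i + (i' - i) + (j - i)).
  by rewrite E2 subnKC ?(ltnW lt_ii') // eq_c subnKC.
have [l T2l le_lk] := sst_diag_up hla2 hT2 i_gt0 T2k.
have neq_lk : l != k.
  by apply: contraTneq lt_ii' => eq_lk; move: T2l; rewrite eq_lk E2 => -[<-]; rewrite ltnn.
have lt_lk : l < k by rewrite ltn_neqAle neq_lk.
case: hT1 => T1_inj _ _ _ _; move/eqP: neq_lk; apply; apply: T1_inj.
by rewrite agree // T2l E1 subnKC.
Qed.

Lemma sst_eq_of_content {la1 la2 n} {T1 T2 : {ffun 'I_n -> nat * nat}} :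
  strict_partition la1 -> strict_partition la2 -> is_sst la1 T1 -> is_sst la2 T2 ->
  (forall k, content (T1 k) = content (T2 k)) -> T1 = T2.
Proof.
move=> hla1 hla2 hT1 hT2 eq_c; apply/ffunP => k.
have [m] := ubnP k; elim: m k => // m IHm k /ltnSE le_km.
have agree (l : 'I_n) : l < k -> T1 l = T2 l.
  by move=> lt_lk; apply: IHm; exact: leq_trans lt_lk le_km.
have agree' (l : 'I_n) : l < k -> T2 l = T1 l by move/agree.
have := sst_row_le hla2 hT1 hT2 agree (eq_c k).
have := sst_row_le hla1 hT2 hT1 agree' (esym (eq_c k)).
have := eq_c k; have := sst_content_le hT1 k; have := sst_content_le hT2 k.
rewrite /content; case: (T1 k) => i j; case: (T2 k) => i' j' /= *.
congr pair; lia.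
Qed.

Lemma in_shifted_last_diag {la} : strict_partition la -> 0 < size la ->
  in_shifted la (size la, size la).
Proof.
move=> hla size_gt0; have := strict_partition_nth_gt0 (size la).-1 hla.
rewrite prednK // => /(_ (leqnn _)) nth_gt0; apply/and4P; split => //=; lia.
Qed.

Lemma in_shifted_inj la mu : strict_partition la -> strict_partition mu ->
  in_shifted la =1 in_shifted mu -> la = mu.
Proof.
move=> hla hmu eq_sh.
have size_le la' mu' : strict_partition la' -> in_shifted la' =1 in_shifted mu' ->
    size la' <= size mu'.
  move=> hla' eq_sh'; have [->|size_gt0] := posnP (size la'); first by [].
  by move: (in_shifted_last_diag hla' size_gt0); rewrite eq_sh' => /and4P [].
have eq_size : size la = size mu by apply/eqP; rewrite eqn_leq !size_le // => b; rewrite eq_sh.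
apply: (eq_from_nth (x0 := 0) eq_size) => i lt_i_size.
have eq_lt m : (m < nth 0 la i) = (m < nth 0 mu i).
  have := eq_sh (i.+1, i.+1 + m).
  by rewrite /in_shifted /= -eq_size lt_i_size leq_addr !ltn_add2l.
apply/eqP; rewrite eqn_leq; apply/andP; split; rewrite leqNgt; apply/negP.
- by rewrite eq_lt ltnn.
- by rewrite -eq_lt ltnn.
Qed.

Lemma sst_shape_inj la mu n (T : {ffun 'I_n -> nat * nat}) :
  strict_partition la -> strict_partition mu -> is_sst la T -> is_sst mu T -> la = mu.
Proof.
move=> hla hmu hTla hTmu; apply: in_shifted_inj => // b.
apply/idP/idP.
- by case: hTla => _ _ T_onto _ _ /T_onto [k <-]; apply: sst_in_shifted hTmu k.
- by case: hTmu => _ _ T_onto _ _ /T_onto [k <-]; apply: sst_in_shifted hTla k.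
Qed.

Local Open Scope ring_scope.

Theorem lemma2p34 (R : realType) (q : R[i]) (s : nat -> R[i])
  (hq0 : q != 0)
  (hq : forall m : nat, (0 < m)%N -> q ^+ m != 1)
  (hs : forall m : nat, s m ^+ 2 = qint q m.+1 * qint q m)
  (n : nat) (la mu : seq nat)
  (hla : strict_partition la) (hmu : strict_partition mu)
  (hlan : sumn la = n) (hmun : sumn mu = n)
  (Lam Gam : {ffun 'I_n -> nat * nat})
  (hLam : is_sst la Lam) (hGam : is_sst mu Gam)
  (nu1 nu2 : 'I_n -> int)
  (hnu1 : forall k, nu1 k = 1 \/ nu1 k = -1)
  (hnu2 : forall k, nu2 k = 1 \/ nu2 k = -1)
  (heq : forall k : 'I_n, qk q s Lam k ^ nu1 k = qk q s Gam k ^ nu2 k) :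
  Lam = Gam /\ la = mu.
Proof.
have two_neq0 : 2 != 0 :> R[i] by rewrite pnatr_eq0.
have eq_content k : content (Lam k) = content (Gam k).
  exact: xq_powz_inj hq0 hq hs two_neq0 _ _ _ _ (hnu1 k) (hnu2 k) (heq k).
have eq_tableaux := sst_eq_of_content hla hmu hLam hGam eq_content.
split => //; rewrite -eq_tableaux in hGam.
exact: sst_shape_inj hla hmu hLam hGam.
Qed.
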